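(* Let $n\ge 3$ and let $X=\mathrm{C}_n$ be the cycle graph on $n$ vertices. Then $|\mathrm{Fix}(\mathbf{F}^\uparrow)|=2+\mathrm{Luc}_{3n}=2+(2+\sqrt5)^n+(2-\sqrt5)^n$, where $\mathrm{Luc}_m$ is the $m$-th Lucas number ($\mathrm{Luc}_0=2$, $\mathrm{Luc}_1=1$, $\mathrm{Luc}_m=\mathrm{Luc}_{m-1}+\mathrm{Luc}_{m-2}$).
   Context: For a finite simple graph $X$ with vertices $1,\dots,n$, $d(v)$ is the degree of $v$ and $n[v]$ the closed neighborhood of $v$. An extended vertex state is $s_v=(x_v,k_v)\in\{0,1\}\times\{1,\dots,d(v)+1\}$; $\mathcal{S}$ is the product of these sets. Let $\sigma(x[v])=|\{u\in n[v]:x_u=1\}|$. The increasing vertex function maps $(x_v,k_v)$ to $(x_v',k_v')$ with $x_v'=1$ iff $\sigma(x[v])\ge k_v$ (else $0$), and $k_v'=k_v+1$ if $x_v=0$ and $\sigma(x[v])\ge k_v$, else $k_v'=k_v$. $\mathbf{F}^\uparrow:\mathcal{S}\to\mathcal{S}$ applies this vertex function at all vertices simultaneously, and $\mathrm{Fix}(\mathbf{F}^\uparrow)$ is its set of fixed points (equivalently: states with, for every $v$, either $x_v=0$ and $\sigma(x[v])<k_v$, or $x_v=1$ and $\sigma(x[v])\ge k_v$). *)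

From mathcomp Require Import all_boot all_order all_algebra.
Set Implicit Arguments. Unset Strict Implicit. Unset Printing Implicit Defensive.

Definition simple_graph (T : finType) (e : rel T) : Prop :=
  symmetric e /\ irreflexive e.

Definition deg (T : finType) (e : rel T) (v : T) : nat := #|[set u | e v u]|.

Definition cnbhd (T : finType) (e : rel T) (v : T) : {set T} :=
  v |: [set u | e v u].

(* An (encoded) extended state: for each vertex a pair (x_v, k_v); the
   threshold k_v is stored as a natural number below #|T|+1 (enough room,
   since d(v)+1 <= #|T|); the admissible states (the product set S) are
   those with 1 <= k_v <= d(v)+1. *)
Definition state (T : finType) := {ffun T -> bool * 'I_(#|T|.+1)}.

Definition xs (T : finType) (s : state T) (v : T) : bool := (s v).1.
Definition ks (T : finType) (s : state T) (v : T) : nat := (s v).2.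

Definition admissible (T : finType) (e : rel T) (s : state T) : bool :=
  [forall v, (1 <= ks s v) && (ks s v <= deg e v + 1)].

Definition sigma (T : finType) (e : rel T) (s : state T) (v : T) : nat :=
  #|[set u in cnbhd e v | xs s u]|.

Definition fup_x (T : finType) (e : rel T) (s : state T) (v : T) : bool :=
  ks s v <= sigma e s v.
Definition fup_k (T : finType) (e : rel T) (s : state T) (v : T) : nat :=
  if ~~ xs s v && (ks s v <= sigma e s v) then (ks s v).+1 else ks s v.

Definition is_fixed (T : finType) (e : rel T) (s : state T) : bool :=
  [forall v, (fup_x e s v == xs s v) && (fup_k e s v == ks s v)].

Definition Fix_up (T : finType) (e : rel T) : {set state T} :=
  [set s | admissible e s && is_fixed e s].

Definition cycle_rel (n : nat) : rel 'I_n :=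
  fun i j => (i != j) && ((j == (i.+1 %% n) :> nat) || (i == (j.+1 %% n) :> nat)).

Fixpoint lucas (m : nat) : nat :=
  match m with
  | 0 => 2
  | 1 => 1
  | (m'.+1 as p).+1 => lucas p + lucas m'
  end.

From mathcomp Require Import all_boot all_order all_algebra.
From mathcomp Require Import zify ring.
Import GRing.Theory Num.Theory.
Set Implicit Arguments. Unset Strict Implicit. Unset Printing Implicit Defensive.

(* A state is fixed iff every vertex v has 1 <= k_v <= d(v)+1 and (k_v <= sigma(x[v])) = x_v,
   so a configuration x carries exactly prod_v (if x_v then sigma(x[v]) else d(v)+1-sigma(x[v]))
   fixed points.  On C_n the factor at v only depends on (x_{v-1}, x_v, x_{v+1}), so summing over x
   gives the trace of the n-th power of a 4x4 transfer matrix indexed by pairs of consecutive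
   values.  Its characteristic polynomial is (t-1)^2 (t^2-4t-1), hence the count satisfies the
   matching linear recurrence of order 4.  So does 2 + Luc_{3n}, because Luc_{3k} = a^k + b^k
   where a, b = 2 +- sqrt 5 are the roots of t^2-4t-1; four initial values then settle the claim. *)

Lemma sum_nat_interval N lo hi : lo <= hi < N ->
  \sum_(j < N) (lo < j <= hi : nat) = hi - lo.
Proof.
move=> /andP[le_lo_hi lt_hi_N].
rewrite -(big_mkord xpredT (fun j => (lo < j <= hi : nat))).
rewrite (big_cat_nat (n := lo.+1)) //=; last by lia.
rewrite (big_cat_nat (m := lo.+1) (n := hi.+1)) //=.
have -> : \sum_(0 <= j < lo.+1) (lo < j <= hi : nat) = 0.
  by rewrite big_nat_cond big1 // => j /andP[/andP[_]]; rewrite ltnS leqNgt => /negbTE->.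
have -> : \sum_(hi.+1 <= j < N) (lo < j <= hi : nat) = 0.
  by rewrite big_nat_cond big1 // => j /andP[/andP[]]; rewrite ltnNge => /negbTE->; rewrite andbF.
rewrite (@eq_big_nat _ _ _ lo.+1 hi.+1 _ (fun=> 1)) => [|j /andP[lej ltj]]; last first.
  by rewrite lej -ltnS ltj.
by rewrite sum_nat_const_nat subSS muln1 add0n addn0.
Qed.

Definition nfixed_thresholds (d s : nat) (b : bool) : nat := if b then s else d.+1 - s.

Lemma sum_fixed_thresholds N d s b : s <= d.+1 -> d.+1 <= N ->
  \sum_(j < N.+1) ((1 <= j <= d + 1) && ((j <= s) == b) : nat) = nfixed_thresholds d s b.
Proof.
move=> le_s_d le_d_N; have -> : nfixed_thresholds d s b =
    \sum_(j < N.+1) ((if b then 0 < j <= s else s < j <= d.+1) : nat).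
  by case: b; rewrite /nfixed_thresholds sum_nat_interval ?subn0 //; lia.
by apply: eq_bigr => j _; case: b; congr nat_of_bool; apply/idP/idP; lia.
Qed.

Lemma prodn_forall (I : finType) (P : pred I) : \prod_(i : I) P i = [forall i, P i] :> nat.
Proof.
case: (boolP [forall i, P i]) => [/forallP allP | /forallPn[i /negbTE Pi]].
  by rewrite big1 // => i _; rewrite allP.
by rewrite (bigD1 i) //= Pi.
Qed.

Section FixedPoints.
Variables (T : finType) (e : rel T).

Lemma in_Fix_up s : (s \in Fix_up e) =
  [forall v, (1 <= ks s v <= deg e v + 1) && ((ks s v <= sigma e s v) == xs s v)].
Proof.
rewrite inE /admissible /is_fixed /fup_x /fup_k.
apply/andP/forallP => [[/forallP adm /forallP fixed] v | fixed].
  by have /andP[fx _] := fixed v; rewrite adm fx.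
split; apply/forallP => v; have /andP[adm_v /eqP fx] := fixed v; first exact: adm_v.
by rewrite fx andNb !eqxx.
Qed.

Definition sigma_cfg (x : {ffun T -> bool}) (v : T) : nat := #|[set u in cnbhd e v | x u]|.

Definition pair_state (x : {ffun T -> bool}) (k : {ffun T -> 'I_(#|T|.+1)}) : state T :=
  [ffun v => (x v, k v)].

Lemma pair_state_bij : bijective (fun p => pair_state p.1 p.2).
Proof.
exists (fun s : state T => ([ffun v => (s v).1], [ffun v => (s v).2])).
  by case=> x k; congr pair; apply/ffunP => v; rewrite !ffunE.
by move=> s; apply/ffunP => v; rewrite !ffunE; case: (s v).
Qed.

Lemma sigma_pair_state x k v : sigma e (pair_state x k) v = sigma_cfg x v.
Proof. by apply: eq_card => u; rewrite !inE /xs ffunE. Qed.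

Definition fixed_threshold (x : {ffun T -> bool}) (v : T) (j : nat) : bool :=
  (1 <= j <= deg e v + 1) && ((j <= sigma_cfg x v) == x v).

Lemma pair_state_Fix_up x k :
  (pair_state x k \in Fix_up e) = [forall v, fixed_threshold x v (k v)].
Proof.
by rewrite in_Fix_up; apply: eq_forallb => v; rewrite sigma_pair_state /ks /xs ffunE.
Qed.

(* Irreflexivity gives d(v)+1 <= #|T|, so every admissible threshold fits in 'I_(#|T|.+1). *)
Hypothesis e_irr : irreflexive e.

Lemma card_cnbhd v : #|cnbhd e v| = (deg e v).+1.
Proof. by rewrite cardsU1 inE e_irr. Qed.

Lemma card_Fix_up : #|Fix_up e| =
  \sum_(x : {ffun T -> bool}) \prod_(v : T) nfixed_thresholds (deg e v) (sigma_cfg x v) (x v).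
Proof.
rewrite -sum1_card big_mkcond (reindex _ (onW_bij _ pair_state_bij)) /=.
rewrite -(pair_bigA _ (fun x k => if pair_state x k \in Fix_up e then 1 else 0)).
apply: eq_bigr => x _.
under eq_bigr => k _ do
  rewrite pair_state_Fix_up -[if _ then _ else _]/(nat_of_bool _) -prodn_forall.
rewrite -(bigA_distr_bigA (fun v (j : 'I_(#|T|.+1)) => fixed_threshold x v j : nat)).
apply: eq_bigr => v _; apply: sum_fixed_thresholds.
  by rewrite -card_cnbhd; apply/subset_leq_card/subsetP => u; rewrite inE => /andP[].
by rewrite -card_cnbhd max_card.
Qed.

End FixedPoints.

Lemma val_iter_ordS n (v : 'I_n) k : val (iter k (@ordS n) v) = (v + k) %% n.
Proof.
elim: k => [|k IH] /=; first by rewrite addn0 modn_small.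
by rewrite IH -addn1 modnDml -addnA addn1.
Qed.

Lemma iter_ordS_neq n (v : 'I_n) k : 0 < k < n -> iter k (@ordS n) v != v.
Proof.
move=> /andP[k_gt0 k_lt_n]; rewrite -val_eqE val_iter_ordS.
rewrite -[X in _ != X](modn_small (ltn_ord v)) -[X in _ != X %% _]addn0 eqn_modDl.
by rewrite mod0n modn_small // -lt0n.
Qed.

Definition local_weight (a b c : bool) : nat := nfixed_thresholds 2 (a + b + c) b.

Section CycleGraph.
Variable n : nat.
Hypothesis n_gt2 : 2 < n.

Lemma ordS_neq (v : 'I_n) : ordS v != v.
Proof. exact: (@iter_ordS_neq n v 1 (ltnW n_gt2)). Qed.

Lemma ord_pred_neq (v : 'I_n) : ord_pred v != v.
Proof. by rewrite (can2_eq (@ord_predK n) (@ordSK n)) eq_sym ordS_neq. Qed.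

Lemma ord_pred_neq_ordS (v : 'I_n) : ord_pred v != ordS v.
Proof. by rewrite (can2_eq (@ord_predK n) (@ordSK n)) eq_sym (iter_ordS_neq v (k := 2)). Qed.

Lemma cycle_rel_irr : irreflexive (@cycle_rel n).
Proof. by move=> v; rewrite /cycle_rel eqxx. Qed.

Lemma cycle_nbhd (v : 'I_n) : [set u | cycle_rel v u] = [set ordS v; ord_pred v].
Proof.
apply/setP => u; rewrite !inE /cycle_rel.
have -> : (u == v.+1 %% n :> nat) = (u == ordS v) by [].
have -> : (v == u.+1 %% n :> nat) = (u == ord_pred v).
  by rewrite -[_ == _]/(v == ordS u) eq_sym (can2_eq (@ordSK n) (@ord_predK n)).
apply/andb_idl => /orP[] /eqP->; rewrite eq_sym ?ordS_neq ?ord_pred_neq //.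
Qed.

Lemma deg_cycle (v : 'I_n) : deg (@cycle_rel n) v = 2.
Proof. by rewrite /deg cycle_nbhd cards2 eq_sym ord_pred_neq_ordS. Qed.

Lemma sigma_cfg_cycle (x : {ffun 'I_n -> bool}) v :
  sigma_cfg (@cycle_rel n) x v = x (ord_pred v) + x v + x (ordS v).
Proof.
rewrite /sigma_cfg -sum1_card (eq_bigl (fun u => (u \in cnbhd (@cycle_rel n) v) && x u));
  last by move=> u; rewrite inE.
rewrite big_mkcondr /cnbhd cycle_nbhd /=.
rewrite big_setU1 ?big_setU1 ?big_set1 /=.
- by case: (x v); case: (x (ord_pred v)); case: (x (ordS v)).
- by rewrite inE eq_sym ord_pred_neq_ordS.
- by rewrite !inE negb_or eq_sym ordS_neq eq_sym ord_pred_neq.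
Qed.

Lemma card_Fix_up_cycle : #|Fix_up (@cycle_rel n)| =
  \sum_(x : {ffun 'I_n -> bool}) \prod_v local_weight (x (ord_pred v)) (x v) (x (ordS v)).
Proof.
rewrite card_Fix_up; last exact: cycle_rel_irr.
by apply: eq_bigr => x _; apply: eq_bigr => v _; rewrite deg_cycle sigma_cfg_cycle.
Qed.

End CycleGraph.

Fixpoint path_weight (a b : bool) (l : seq bool) : nat :=
  if l is c :: l' then local_weight a b c * path_weight b c l' else 1.

Lemma path_weight_nth a b l : path_weight a b l =
  \prod_(i < size l) local_weight (nth false [:: a, b & l] i)
    (nth false [:: a, b & l] i.+1) (nth false [:: a, b & l] i.+2).
Proof.
elim: l a b => [|c l IH] a b /=; first by rewrite big_ord0.
by rewrite big_ord_recl IH; congr (_ * _).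
Qed.

Definition cycle_weight (l : seq bool) : nat :=
  if l is a :: b :: r then path_weight a b (r ++ [:: a; b]) else 0.

Lemma nth_cat_take_mod (T : Type) (x0 : T) (s : seq T) k j :
  k <= size s -> j < size s + k -> nth x0 (s ++ take k s) j = nth x0 s (j %% size s).
Proof.
move=> le_k_s lt_j; rewrite nth_cat; case: ltnP => [lt_j_s|le_s_j].
  by rewrite modn_small.
rewrite nth_take; last by lia.
by rewrite -[X in X %% _](subnK le_s_j) modnDr modn_small //; lia.
Qed.

Lemma cycle_weight_nth l : 1 < size l -> cycle_weight l =
  \prod_(i < size l) local_weight (nth false l i)
    (nth false l (i.+1 %% size l)) (nth false l (i.+2 %% size l)).
Proof.
case: l => [|a [|b r]] // size_l; rewrite /cycle_weight path_weight_nth.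
have -> : [:: a, b & r ++ [:: a; b]] = [:: a, b & r] ++ take 2 [:: a, b & r].
  by rewrite /= take0.
rewrite size_cat addn2; apply: eq_bigr => i _.
have lt_i := ltn_ord i.
by rewrite !nth_cat_take_mod ?(modn_small lt_i) //=; lia.
Qed.

Lemma prod_local_weight_cycle n (x : {ffun 'I_n -> bool}) : 1 < n ->
  \prod_v local_weight (x (ord_pred v)) (x v) (x (ordS v)) = cycle_weight (fgraph x).
Proof.
move=> n_gt1; have size_x : size (fgraph x) = n by rewrite size_tuple card_ord.
rewrite cycle_weight_nth size_x // (reindex_inj (@ordS_inj n)) /=.
apply: eq_bigr => v _; rewrite ordSK -!(nth_fgraph_ord false) /=.
by rewrite -[(v.+1 %% n).+1]addn1 modnDml addn1.
Qed.

Fixpoint bool_seqs (m : nat) : seq (seq bool) :=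
  if m is m'.+1 then map (cons false) (bool_seqs m') ++ map (cons true) (bool_seqs m')
  else [:: [::]].

Lemma mem_bool_seqs m l : (l \in bool_seqs m) = (size l == m).
Proof.
have mem_cons_map b c l' s : (b :: l' \in map (cons c) s) = (b == c) && (l' \in s).
  by apply/mapP/andP => [[l'' l''s [-> ->]] | [/eqP-> l's]]; [rewrite eqxx | exists l'].
elim: m l => [|m IH] [|b l] //=; rewrite mem_cat.
  by apply/negbTE/norP; split; apply/mapP => -[].
by rewrite !mem_cons_map IH eqSS; case: b; rewrite /= ?orbF.
Qed.

Lemma uniq_bool_seqs m : uniq (bool_seqs m).
Proof.
elim: m => [|m IH] //=; rewrite cat_uniq !map_inj_uniq // ?IH /=; try by move=> ? ? [].
by rewrite andbT; apply/hasPn => _ /mapP[l _ ->]; apply/mapP => -[? _].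
Qed.

Lemma sum_ffun_bool_seqs n (G : seq bool -> nat) :
  \sum_(x : {ffun 'I_n -> bool}) G (fgraph x) = \sum_(l <- bool_seqs n) G l.
Proof.
rewrite -(big_map (fun x : {ffun 'I_n -> bool} => fgraph x : seq bool) xpredT G).
have inj_fgraph : injective (fun x : {ffun 'I_n -> bool} => fgraph x : seq bool).
  by move=> x y /val_inj/(can_inj (@fgraphK _ _)).
apply/perm_big/uniq_perm; rewrite ?map_inj_uniq ?index_enum_uniq ?uniq_bool_seqs // => l.
rewrite mem_bool_seqs; apply/mapP/idP => [[x _ ->]|size_l].
  by rewrite size_tuple card_ord.
have size_l' : size l == #|'I_n| by rewrite card_ord.
by exists (Finfun (Tuple size_l')); rewrite ?mem_index_enum ?FinfunK.
Qed.

(* The entry ((a, b), (c, d)) of the (m+2)-th power of the transfer matrix. *)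
Fixpoint bridge_weight (m : nat) (a b c d : bool) : nat :=
  if m is m'.+1 then
    local_weight a b false * bridge_weight m' b false c d +
    local_weight a b true * bridge_weight m' b true c d
  else local_weight a b c * local_weight b c d.

Lemma sum_path_weight_cat m a b c d :
  \sum_(l <- bool_seqs m) path_weight a b (l ++ [:: c; d]) = bridge_weight m a b c d.
Proof.
elim: m a b => [|m IH] a b /=; first by rewrite big_seq1 /= muln1.
by rewrite big_cat !big_map /= -!big_distrr /= !IH.
Qed.

Definition closed_walk_weight (m : nat) : nat :=
  bridge_weight m false false false false + bridge_weight m false true false true +
  bridge_weight m true false true false + bridge_weight m true true true true.

Lemma sum_cycle_weight m :
  \sum_(l <- bool_seqs m.+2) cycle_weight l = closed_walk_weight m.
Proof.
by rewrite /= !big_cat !big_map /= !big_cat !big_map !sum_path_weight_cat !addnA.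
Qed.

Definition transfer_rec (f : nat -> nat) : Prop :=
  forall m, f m.+4 + 8 * f m.+2 = 6 * f m.+3 + 2 * f m.+1 + f m.

Lemma transfer_rec_eq f g : transfer_rec f -> transfer_rec g ->
  (forall m, m < 4 -> f m = g m) -> f =1 g.
Proof.
move=> rec_f rec_g base.
have agree4 m : [/\ f m = g m, f m.+1 = g m.+1, f m.+2 = g m.+2 & f m.+3 = g m.+3].
  elim: m => [|m [e0 e1 e2 e3]]; first by split; apply: base.
  by split => //; have := rec_f m; have := rec_g m; lia.
by move=> m; case: (agree4 m).
Qed.

Lemma bridge_weight_rec a b c d : transfer_rec (fun m => bridge_weight m a b c d).
Proof. by move=> m; case: a; case: b; rewrite /= ?mul1n ?muln1 ?mul0n; lia. Qed.

Lemma closed_walk_weight_rec : transfer_rec closed_walk_weight.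
Proof.
move=> m; rewrite /closed_walk_weight.
have := bridge_weight_rec false false false false m.
have := bridge_weight_rec false true false true m.
have := bridge_weight_rec true false true false m.
by have := bridge_weight_rec true true true true m; lia.
Qed.

Lemma lucas_mul3S k : lucas (3 * k.+2) = 4 * lucas (3 * k.+1) + lucas (3 * k).
Proof.
have -> : 3 * k.+2 = (3 * k).+4.+2 by lia.
have -> : 3 * k.+1 = (3 * k).+3 by lia.
by rewrite /=; lia.
Qed.

Lemma closed_walk_weight_lucas m : closed_walk_weight m = 2 + lucas (3 * m.+2).
Proof.
apply: (@transfer_rec_eq _ (fun m => 2 + lucas (3 * m.+2)) closed_walk_weight_rec).
  move=> k; cbv beta; have := lucas_mul3S k.+2; have := lucas_mul3S k.+3.
  by have := lucas_mul3S k.+4; lia.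
by case=> [|[|[|[|]]]].
Qed.

Lemma card_Fix_up_cycle_lucas n : 2 < n -> #|Fix_up (@cycle_rel n)| = 2 + lucas (3 * n).
Proof.
move=> n_gt2; rewrite card_Fix_up_cycle //.
rewrite (eq_bigr _ (fun x _ => prod_local_weight_cycle x (ltnW n_gt2))) sum_ffun_bool_seqs.
by case: n n_gt2 => [|[|m]] // _; rewrite sum_cycle_weight closed_walk_weight_lucas.
Qed.

Local Open Scope ring_scope.

Lemma lucas_mul3_sqrt5 (R : rcfType) n :
  (lucas (3 * n))%:R = (2 + Num.sqrt 5) ^+ n + (2 - Num.sqrt 5) ^+ n :> R.
Proof.
set s := Num.sqrt (5 : R).
have s2 : s ^+ 2 = 5 by rewrite sqr_sqrtr // ler0n.
have root_p : (2 + s) ^+ 2 = 4 * (2 + s) + 1 by rewrite sqrrD s2; ring.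
have root_m : (2 - s) ^+ 2 = 4 * (2 - s) + 1 by rewrite sqrrB s2; ring.
pose P k := (lucas (3 * k))%:R = (2 + s) ^+ k + (2 - s) ^+ k :> R.
have step k : P k -> P k.+1 -> P k.+2.
  rewrite /P lucas_mul3S natrD natrM => -> ->.
  have expSS x : x ^+ k.+2 = x ^+ 2 * x ^+ k :> R by rewrite -exprD add2n.
  by rewrite !expSS root_p root_m !exprS; ring.
have P2 k : P k /\ P k.+1.
  elim: k => [|k [Pk Pk1]]; last by split; last exact: step.
  by split; rewrite /P /= ?expr0 ?expr1; ring.
by case: (P2 n).
Qed.

Theorem proposition4p4 (n : nat) (hn : (3 <= n)%N) :
  #|Fix_up (@cycle_rel n)| = (2 + lucas (3 * n))%N /\
  (forall R : rcfType,
     (#|Fix_up (@cycle_rel n)|%:R : R) =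
       2 + (2 + Num.sqrt 5) ^+ n + (2 - Num.sqrt 5) ^+ n).
Proof.
have card_Fix := card_Fix_up_cycle_lucas hn.
by split=> // R; rewrite card_Fix natrD lucas_mul3_sqrt5 addrA.
Qed.
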